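(* Let $B(u)$ be as below and $A(u)=q_1^2u+2q_1q_2$. With respect to the canonical bracket $\{q_i,p_j\}=\delta_{ij}$, $\{q_1,q_2\}=\{p_1,p_2\}=0$, $\{f,g\}=\sum_i(\partial_{q_i}f\,\partial_{p_i}g-\partial_{p_i}f\,\partial_{q_i}g)$, one has for all $u\neq v$ $$\{B(u),A(v)\}=\frac{B(u)-B(v)}{u-v},\qquad \{A(u),A(v)\}=0 .$$ Consequently, where the roots $u_1\neq u_2$ of $B$ are distinct, the functions $u_1,u_2,\ v_1=-A(u_1),\ v_2=-A(u_2)$ are canonical coordinates: $\{u_i,v_j\}=\delta_{ij}$, $\{u_1,u_2\}=\{v_1,v_2\}=0$.
   Context: $t_1,t_2$ are constants, $q_1\ne0$, and $$B(u)=u^2-\frac{p_2-2q_2}{2q_1}u+\frac{q_1^2}{6}-\frac{t_1}{2}-\frac{p_1}{2q_1}+\frac{p_2^2/4-q_2^2+t_2}{2q_1^2}.$$ *)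

From Stdlib Require Import Reals Lra.
From Coquelicot Require Import Coquelicot.
Open Scope R_scope.

(* Functions on phase space, arguments ordered (q1, q2, p1, p2). *)
Definition fn4 := R -> R -> R -> R -> R.

Definition Bfun (t1 t2 q1 q2 p1 p2 u : R) : R :=
  u^2 - (p2 - 2*q2)/(2*q1) * u + q1^2/6 - t1/2 - p1/(2*q1)
  + (p2^2/4 - q2^2 + t2)/(2*q1^2).

Definition Afun (q1 q2 p1 p2 u : R) : R := q1^2 * u + 2*q1*q2.

Definition d_q1 (f : fn4) q1 q2 p1 p2 := Derive (fun x => f x q2 p1 p2) q1.
Definition d_q2 (f : fn4) q1 q2 p1 p2 := Derive (fun x => f q1 x p1 p2) q2.
Definition d_p1 (f : fn4) q1 q2 p1 p2 := Derive (fun x => f q1 q2 x p2) p1.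
Definition d_p2 (f : fn4) q1 q2 p1 p2 := Derive (fun x => f q1 q2 p1 x) p2.

Definition pb (f g : fn4) q1 q2 p1 p2 : R :=
  (d_q1 f q1 q2 p1 p2 * d_p1 g q1 q2 p1 p2 - d_p1 f q1 q2 p1 p2 * d_q1 g q1 q2 p1 p2)
+ (d_q2 f q1 q2 p1 p2 * d_p2 g q1 q2 p1 p2 - d_p2 f q1 q2 p1 p2 * d_q2 g q1 q2 p1 p2).

(* B(u) = u^2 - b u + c ;  discriminant and the two roots *)
Definition bcoef (q1 q2 p1 p2 : R) : R := (p2 - 2*q2)/(2*q1).
Definition discB (t1 t2 q1 q2 p1 p2 : R) : R :=
  (bcoef q1 q2 p1 p2)^2 - 4 * Bfun t1 t2 q1 q2 p1 p2 0.
Definition rootU1 (t1 t2 : R) : fn4 := fun q1 q2 p1 p2 =>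
  (bcoef q1 q2 p1 p2 + sqrt (discB t1 t2 q1 q2 p1 p2)) / 2.
Definition rootU2 (t1 t2 : R) : fn4 := fun q1 q2 p1 p2 =>
  (bcoef q1 q2 p1 p2 - sqrt (discB t1 t2 q1 q2 p1 p2)) / 2.
Definition canV1 (t1 t2 : R) : fn4 := fun q1 q2 p1 p2 =>
  - Afun q1 q2 p1 p2 (rootU1 t1 t2 q1 q2 p1 p2).
Definition canV2 (t1 t2 : R) : fn4 := fun q1 q2 p1 p2 =>
  - Afun q1 q2 p1 p2 (rootU2 t1 t2 q1 q2 p1 p2).

From Stdlib Require Import Reals Lra.
From Coquelicot Require Import Coquelicot.
Open Scope R_scope.

(* The brackets depend only on gradients, on which the canonical bracket is the
   symplectic form [omega].  Writing B(u) = u^2 - b u + c, the gradient of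
   B(u) at fixed u is grad c - u grad b, and one computes {b, c} = 0 and
   {B(u), A(w)} = u + w - b.  Implicit differentiation of B(u_i) = 0 gives
   grad u_i = - grad B(u_i) / (2 u_i - b), so {u_1, u_2} is a multiple of
   {b, c} = 0, while {u_i, A(u_j)} = - (u_i + u_j - b) / (2 u_i - b); since
   u_1 + u_2 = b, this yields {u_i, v_j} = delta_ij and {v_1, v_2} = 0. *)

Record covec := Covec { cq1 : R; cq2 : R; cp1 : R; cp2 : R }.

Definition cadd (g h : covec) : covec :=
  Covec (cq1 g + cq1 h) (cq2 g + cq2 h) (cp1 g + cp1 h) (cp2 g + cp2 h).
Definition csub (g h : covec) : covec :=
  Covec (cq1 g - cq1 h) (cq2 g - cq2 h) (cp1 g - cp1 h) (cp2 g - cp2 h).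
Definition cscale (s : R) (g : covec) : covec :=
  Covec (s * cq1 g) (s * cq2 g) (s * cp1 g) (s * cp2 g).

Definition omega (g h : covec) : R :=
  (cq1 g * cp1 h - cp1 g * cq1 h) + (cq2 g * cp2 h - cp2 g * cq2 h).

Lemma omega_scalel s g h : omega (cscale s g) h = s * omega g h.
Proof. unfold omega, cscale; simpl; ring. Qed.

Lemma omega_scaler s g h : omega g (cscale s h) = s * omega g h.
Proof. unfold omega, cscale; simpl; ring. Qed.

Lemma omega_addl g h k : omega (cadd g h) k = omega g k + omega h k.
Proof. unfold omega, cadd; simpl; ring. Qed.

Lemma omega_addr g h k : omega g (cadd h k) = omega g h + omega g k.
Proof. unfold omega, cadd; simpl; ring. Qed.

Lemma omega_antisym g h : omega g h = - omega h g.
Proof. unfold omega; ring. Qed.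

Lemma omega_csub_isotropic gb gc u w : omega gb gc = 0 ->
  omega (csub gc (cscale u gb)) (csub gc (cscale w gb)) = 0.
Proof.
  intros h.
  transitivity ((w - u) * omega gb gc); [unfold omega, csub, cscale; simpl; ring|].
  rewrite h; ring.
Qed.

Definition has_grad (f : fn4) (q1 q2 p1 p2 : R) (g : covec) : Prop :=
  is_derive (fun x => f x q2 p1 p2) q1 (cq1 g) /\
  is_derive (fun x => f q1 x p1 p2) q2 (cq2 g) /\
  is_derive (fun x => f q1 q2 x p2) p1 (cp1 g) /\
  is_derive (fun x => f q1 q2 p1 x) p2 (cp2 g).

Lemma pb_has_grad (f g : fn4) q1 q2 p1 p2 gf gg :
  has_grad f q1 q2 p1 p2 gf -> has_grad g q1 q2 p1 p2 gg ->
  pb f g q1 q2 p1 p2 = omega gf gg.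
Proof.
  intros (f1 & f2 & f3 & f4) (g1 & g2 & g3 & g4).
  unfold pb, d_q1, d_q2, d_p1, d_p2.
  repeat match goal with |- context [Derive ?F ?x] =>
    erewrite (is_derive_unique F x) by eassumption end.
  reflexivity.
Qed.

Lemma has_grad_ext (f g : fn4) q1 q2 p1 p2 gr :
  (forall a b c d, f a b c d = g a b c d) ->
  has_grad f q1 q2 p1 p2 gr -> has_grad g q1 q2 p1 p2 gr.
Proof.
  intros hfg (h1 & h2 & h3 & h4).
  split; [|split; [|split]].
  - eapply is_derive_ext; [|exact h1]; intros t; apply hfg.
  - eapply is_derive_ext; [|exact h2]; intros t; apply hfg.
  - eapply is_derive_ext; [|exact h3]; intros t; apply hfg.
  - eapply is_derive_ext; [|exact h4]; intros t; apply hfg.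
Qed.

Lemma is_derive_quadratic_root (b c : R -> R) (e x b' c' : R) :
  e = 1 \/ e = -1 -> 0 < b x ^ 2 - 4 * c x ->
  is_derive b x b' -> is_derive c x c' ->
  let u := (b x + e * sqrt (b x ^ 2 - 4 * c x)) / 2 in
  is_derive (fun y => (b y + e * sqrt (b y ^ 2 - 4 * c y)) / 2) x
    (- / (2 * u - b x) * (c' - u * b')).
Proof.
  intros he hD hb hc u.
  auto_derive.
  - repeat split; try (eexists; eassumption). lra.
  - repeat match goal with |- context [Derive ?f x] =>
      first [rewrite (is_derive_unique f x b' hb) | rewrite (is_derive_unique f x c' hc)] end.
    replace (b x * (b x * 1) + - (4 * c x)) with (b x ^ 2 - 4 * c x) by ring.
    assert (hS : sqrt (b x ^ 2 - 4 * c x) <> 0) by (apply Rgt_not_eq, sqrt_lt_R0; lra).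
    unfold u; destruct he as [-> | ->]; field; repeat split; lra.
Qed.

Definition qroot (e : R) (b c : fn4) : fn4 := fun q1 q2 p1 p2 =>
  (b q1 q2 p1 p2 + e * sqrt (b q1 q2 p1 p2 ^ 2 - 4 * c q1 q2 p1 p2)) / 2.

Lemma has_grad_qroot (e : R) (b c : fn4) q1 q2 p1 p2 gb gc :
  e = 1 \/ e = -1 -> 0 < b q1 q2 p1 p2 ^ 2 - 4 * c q1 q2 p1 p2 ->
  has_grad b q1 q2 p1 p2 gb -> has_grad c q1 q2 p1 p2 gc ->
  let u := qroot e b c q1 q2 p1 p2 in
  has_grad (qroot e b c) q1 q2 p1 p2
    (cscale (- / (2 * u - b q1 q2 p1 p2)) (csub gc (cscale u gb))).
Proof.
  intros he hD (b1 & b2 & b3 & b4) (c1 & c2 & c3 & c4) u.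
  split; [|split; [|split]].
  - exact (is_derive_quadratic_root (fun x => b x q2 p1 p2) (fun x => c x q2 p1 p2)
             _ _ _ _ he hD b1 c1).
  - exact (is_derive_quadratic_root (fun x => b q1 x p1 p2) (fun x => c q1 x p1 p2)
             _ _ _ _ he hD b2 c2).
  - exact (is_derive_quadratic_root (fun x => b q1 q2 x p2) (fun x => c q1 q2 x p2)
             _ _ _ _ he hD b3 c3).
  - exact (is_derive_quadratic_root (fun x => b q1 q2 p1 x) (fun x => c q1 q2 p1 x)
             _ _ _ _ he hD b4 c4).
Qed.

Definition Afun_grad (q1 q2 w : R) : covec := Covec (2 * q1 * w + 2 * q2) (2 * q1) 0 0.

Lemma has_grad_Afun q1 q2 p1 p2 w :
  has_grad (fun a b c d => Afun a b c d w) q1 q2 p1 p2 (Afun_grad q1 q2 w).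
Proof.
  unfold Afun, Afun_grad; split; [|split; [|split]]; simpl; auto_derive; (exact I || ring).
Qed.

Lemma has_grad_neg_Afun_comp (u : fn4) q1 q2 p1 p2 gu :
  has_grad u q1 q2 p1 p2 gu ->
  has_grad (fun a b c d => - Afun a b c d (u a b c d)) q1 q2 p1 p2
    (cscale (-1) (cadd (Afun_grad q1 q2 (u q1 q2 p1 p2)) (cscale (q1 ^ 2) gu))).
Proof.
  intros (h1 & h2 & h3 & h4).
  unfold Afun, Afun_grad, cadd, cscale; split; [|split; [|split]]; simpl;
    (auto_derive; [repeat (apply conj || exact I || (eexists; eassumption)) |]);
    repeat match goal with |- context [Derive ?F ?x] =>
      erewrite (is_derive_unique F x) by eassumption end;
    ring.
Qed.

Lemma omega_Afun_Afun q1 q2 u w : omega (Afun_grad q1 q2 u) (Afun_grad q1 q2 w) = 0.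
Proof. unfold omega, Afun_grad; simpl; ring. Qed.

Section CanonicalRoots.

Variables t1 t2 q1 q2 p1 p2 : R.
Hypothesis hq1 : q1 <> 0.

Definition bcoef_grad : covec :=
  Covec (- (p2 - 2 * q2) / (2 * q1 ^ 2)) (- 1 / q1) 0 (1 / (2 * q1)).
Definition Bfun0_grad : covec :=
  Covec (q1 / 3 + p1 / (2 * q1 ^ 2) - (p2 ^ 2 / 4 - q2 ^ 2 + t2) / q1 ^ 3)
    (- q2 / q1 ^ 2) (- 1 / (2 * q1)) (p2 / (4 * q1 ^ 2)).
Definition Bfun_grad (u : R) : covec := csub Bfun0_grad (cscale u bcoef_grad).

Ltac solve_partials :=
  split; [|split; [|split]]; simpl; auto_derive;
  solve [ exact I
        | repeat (apply conj || apply Rmult_integral_contrapositive_currified);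
          (exact I || assumption || lra)
        | field; assumption ].

Lemma has_grad_bcoef : has_grad bcoef q1 q2 p1 p2 bcoef_grad.
Proof. unfold bcoef, bcoef_grad; solve_partials. Qed.

Lemma has_grad_Bfun u :
  has_grad (fun a b c d => Bfun t1 t2 a b c d u) q1 q2 p1 p2 (Bfun_grad u).
Proof. unfold Bfun, Bfun_grad, csub, cscale, Bfun0_grad, bcoef_grad; solve_partials. Qed.

Lemma omega_bcoef_Bfun0 : omega bcoef_grad Bfun0_grad = 0.
Proof. unfold omega, bcoef_grad, Bfun0_grad; simpl; field; assumption. Qed.

Lemma omega_Bfun_Afun u w :
  omega (Bfun_grad u) (Afun_grad q1 q2 w) = u + w - bcoef q1 q2 p1 p2.
Proof.
  unfold omega, Bfun_grad, csub, cscale, Bfun0_grad, bcoef_grad, Afun_grad, bcoef; simpl.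
  field; assumption.
Qed.

Lemma Bfun_divided_difference u v : u <> v ->
  (Bfun t1 t2 q1 q2 p1 p2 u - Bfun t1 t2 q1 q2 p1 p2 v) / (u - v)
  = u + v - bcoef q1 q2 p1 p2.
Proof. intros huv; unfold Bfun, bcoef; field; split; [assumption | lra]. Qed.

Definition root_grad (u : R) : covec :=
  cscale (- / (2 * u - bcoef q1 q2 p1 p2)) (Bfun_grad u).
Definition canV_grad (u : R) : covec :=
  cscale (-1) (cadd (Afun_grad q1 q2 u) (cscale (q1 ^ 2) (root_grad u))).

Lemma omega_root_root u w : omega (root_grad u) (root_grad w) = 0.
Proof.
  unfold root_grad, Bfun_grad; rewrite omega_scalel, omega_scaler.
  rewrite (omega_csub_isotropic _ _ _ _ omega_bcoef_Bfun0); ring.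
Qed.

Lemma omega_root_Afun u w : 2 * u - bcoef q1 q2 p1 p2 <> 0 ->
  omega (root_grad u) (Afun_grad q1 q2 w)
  = - (u + w - bcoef q1 q2 p1 p2) / (2 * u - bcoef q1 q2 p1 p2).
Proof. intros hu; unfold root_grad; rewrite omega_scalel, omega_Bfun_Afun; field; assumption. Qed.

Lemma omega_root_canV u w : 2 * u - bcoef q1 q2 p1 p2 <> 0 ->
  omega (root_grad u) (canV_grad w)
  = (u + w - bcoef q1 q2 p1 p2) / (2 * u - bcoef q1 q2 p1 p2).
Proof.
  intros hu; unfold canV_grad.
  rewrite omega_scaler, omega_addr, omega_scaler, omega_root_root, omega_root_Afun by assumption.
  field; assumption.
Qed.

Lemma omega_canV_canV u w :
  2 * u - bcoef q1 q2 p1 p2 <> 0 -> 2 * w - bcoef q1 q2 p1 p2 <> 0 ->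
  u + w = bcoef q1 q2 p1 p2 -> omega (canV_grad u) (canV_grad w) = 0.
Proof.
  intros hu hw huw.
  unfold canV_grad at 1; rewrite omega_scalel, omega_addl, omega_scalel, omega_root_canV by assumption.
  rewrite (omega_antisym (Afun_grad q1 q2 u)); unfold canV_grad.
  rewrite omega_scalel, omega_addl, omega_scalel, omega_Afun_Afun, omega_root_Afun by assumption.
  replace (u + w - bcoef q1 q2 p1 p2) with 0 by lra.
  replace (w + u - bcoef q1 q2 p1 p2) with 0 by lra.
  field; split; assumption.
Qed.

Definition Bfun0 : fn4 := fun a b c d => Bfun t1 t2 a b c d 0.

Lemma Bfun_grad_0 : Bfun_grad 0 = Bfun0_grad.
Proof. unfold Bfun_grad, csub, cscale, Bfun0_grad; simpl; f_equal; ring. Qed.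

Hypothesis hD : 0 < discB t1 t2 q1 q2 p1 p2.

Lemma has_grad_qroot_Bfun e : e = 1 \/ e = -1 ->
  has_grad (qroot e bcoef Bfun0) q1 q2 p1 p2 (root_grad (qroot e bcoef Bfun0 q1 q2 p1 p2)).
Proof.
  intros he.
  pose proof (has_grad_qroot e bcoef Bfun0 q1 q2 p1 p2 _ _ he hD
                has_grad_bcoef (has_grad_Bfun 0)) as h.
  rewrite Bfun_grad_0 in h; exact h.
Qed.

Lemma has_grad_rootU1 :
  has_grad (rootU1 t1 t2) q1 q2 p1 p2 (root_grad (rootU1 t1 t2 q1 q2 p1 p2)).
Proof.
  assert (h : forall a b c d, qroot 1 bcoef Bfun0 a b c d = rootU1 t1 t2 a b c d)
    by (intros; unfold qroot, rootU1, discB, Bfun0; lra).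
  pose proof (has_grad_qroot_Bfun 1 (or_introl eq_refl)) as hg; rewrite h in hg.
  exact (has_grad_ext _ _ _ _ _ _ _ h hg).
Qed.

Lemma has_grad_rootU2 :
  has_grad (rootU2 t1 t2) q1 q2 p1 p2 (root_grad (rootU2 t1 t2 q1 q2 p1 p2)).
Proof.
  assert (h : forall a b c d, qroot (-1) bcoef Bfun0 a b c d = rootU2 t1 t2 a b c d)
    by (intros; unfold qroot, rootU2, discB, Bfun0; lra).
  pose proof (has_grad_qroot_Bfun (-1) (or_intror eq_refl)) as hg; rewrite h in hg.
  exact (has_grad_ext _ _ _ _ _ _ _ h hg).
Qed.

Lemma has_grad_canV1 :
  has_grad (canV1 t1 t2) q1 q2 p1 p2 (canV_grad (rootU1 t1 t2 q1 q2 p1 p2)).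
Proof. exact (has_grad_neg_Afun_comp _ _ _ _ _ _ has_grad_rootU1). Qed.

Lemma has_grad_canV2 :
  has_grad (canV2 t1 t2) q1 q2 p1 p2 (canV_grad (rootU2 t1 t2 q1 q2 p1 p2)).
Proof. exact (has_grad_neg_Afun_comp _ _ _ _ _ _ has_grad_rootU2). Qed.

Lemma roots_canonical_coordinates :
  pb (rootU1 t1 t2) (canV1 t1 t2) q1 q2 p1 p2 = 1 /\
  pb (rootU1 t1 t2) (canV2 t1 t2) q1 q2 p1 p2 = 0 /\
  pb (rootU2 t1 t2) (canV1 t1 t2) q1 q2 p1 p2 = 0 /\
  pb (rootU2 t1 t2) (canV2 t1 t2) q1 q2 p1 p2 = 1 /\
  pb (rootU1 t1 t2) (rootU2 t1 t2) q1 q2 p1 p2 = 0 /\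
  pb (canV1 t1 t2) (canV2 t1 t2) q1 q2 p1 p2 = 0.
Proof.
  pose proof has_grad_rootU1 as hu1; pose proof has_grad_rootU2 as hu2.
  pose proof has_grad_canV1 as hv1; pose proof has_grad_canV2 as hv2.
  rewrite (pb_has_grad _ _ _ _ _ _ _ _ hu1 hv1), (pb_has_grad _ _ _ _ _ _ _ _ hu1 hv2),
    (pb_has_grad _ _ _ _ _ _ _ _ hu2 hv1), (pb_has_grad _ _ _ _ _ _ _ _ hu2 hv2),
    (pb_has_grad _ _ _ _ _ _ _ _ hu1 hu2), (pb_has_grad _ _ _ _ _ _ _ _ hv1 hv2).
  assert (hS : 0 < sqrt (discB t1 t2 q1 q2 p1 p2)) by (apply sqrt_lt_R0; assumption).
  assert (h1 : 2 * rootU1 t1 t2 q1 q2 p1 p2 - bcoef q1 q2 p1 p2 <> 0)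
    by (unfold rootU1; lra).
  assert (h2 : 2 * rootU2 t1 t2 q1 q2 p1 p2 - bcoef q1 q2 p1 p2 <> 0)
    by (unfold rootU2; lra).
  assert (h12 : rootU1 t1 t2 q1 q2 p1 p2 + rootU2 t1 t2 q1 q2 p1 p2 = bcoef q1 q2 p1 p2)
    by (unfold rootU1, rootU2; lra).
  rewrite !omega_root_canV, omega_root_root, omega_canV_canV by assumption.
  rewrite h12, (Rplus_comm (rootU2 _ _ _ _ _ _)), h12, !Rminus_diag.
  repeat split; field; assumption.
Qed.

End CanonicalRoots.

Theorem mainTheorem8 (t1 t2 q1 q2 p1 p2 : R) (hq1 : q1 <> 0) :
  (forall u v : R, u <> v ->
     pb (fun a b c d => Bfun t1 t2 a b c d u) (fun a b c d => Afun a b c d v)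
        q1 q2 p1 p2
     = (Bfun t1 t2 q1 q2 p1 p2 u - Bfun t1 t2 q1 q2 p1 p2 v) / (u - v)) /\
  (forall u v : R,
     pb (fun a b c d => Afun a b c d u) (fun a b c d => Afun a b c d v)
        q1 q2 p1 p2 = 0) /\
  (0 < discB t1 t2 q1 q2 p1 p2 ->
     pb (rootU1 t1 t2) (canV1 t1 t2) q1 q2 p1 p2 = 1 /\
     pb (rootU1 t1 t2) (canV2 t1 t2) q1 q2 p1 p2 = 0 /\
     pb (rootU2 t1 t2) (canV1 t1 t2) q1 q2 p1 p2 = 0 /\
     pb (rootU2 t1 t2) (canV2 t1 t2) q1 q2 p1 p2 = 1 /\
     pb (rootU1 t1 t2) (rootU2 t1 t2) q1 q2 p1 p2 = 0 /\
     pb (canV1 t1 t2) (canV2 t1 t2) q1 q2 p1 p2 = 0).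
Proof.
  split; [|split].
  - intros u v huv.
    rewrite (pb_has_grad _ _ _ _ _ _ _ _ (has_grad_Bfun t1 t2 q1 q2 p1 p2 hq1 u)
               (has_grad_Afun q1 q2 p1 p2 v)).
    rewrite omega_Bfun_Afun, Bfun_divided_difference by assumption; reflexivity.
  - intros u v.
    rewrite (pb_has_grad _ _ _ _ _ _ _ _ (has_grad_Afun q1 q2 p1 p2 u)
               (has_grad_Afun q1 q2 p1 p2 v)).
    apply omega_Afun_Afun.
  - exact (roots_canonical_coordinates t1 t2 q1 q2 p1 p2 hq1).
Qed.
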